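(* Let $K=K(n)=o\left(\frac{\log n}{\log\log n}\right)$. For all sufficiently large $n$ there exists an $n$-vertex graph $G(V,E)$ with maximum degree $\Delta$ such that if for each $v\in V$ a set $L(v)$ of $K$ colors is chosen independently and uniformly at random from $[\Delta+1]$, then with probability $1-o(1)$ there is no proper coloring $\mathcal{C}:V\to[\Delta+1]$ of $G$ with $\mathcal{C}(v)\in L(v)$ for all $v\in V$.
   Context: $[t]=\{1,\ldots,t\}$; a proper coloring has no monochromatic edge. *)

From mathcomp Require Import all_boot.
From Stdlib Require Import Reals.
Set Implicit Arguments. Unset Strict Implicit. Unset Printing Implicit Defensive.

(* A simple graph on vertex set 'I_n is a symmetric irreflexive e : rel 'I_n. *)
Definition maxdeg n (e : rel 'I_n) : nat := \max_(v : 'I_n) #|[set u | e v u]|.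

(* the sample space: list assignments L(v), each a K-subset of the D colors *)
Definition lists n D k : {set {ffun 'I_n -> {set 'I_D}}} :=
  [set L : {ffun 'I_n -> {set 'I_D}} | [forall v, #|L v| == k]].

Definition listcolorable n (e : rel 'I_n) D (L : {ffun 'I_n -> {set 'I_D}}) : bool :=
  [exists c : {ffun 'I_n -> 'I_D},
     [forall v, c v \in L v] && [forall u, forall v, e u v ==> (c u != c v)]].

Definition good_lists n (e : rel 'I_n) k : {set {ffun 'I_n -> {set 'I_(maxdeg e).+1}}} :=
  [set L in lists n (maxdeg e).+1 k | listcolorable e L].

From Stdlib Require Import Reals Lra.
From mathcomp Require Import all_boot zify.
Set Implicit Arguments. Unset Strict Implicit. Unset Printing Implicit Defensive.

(* Take for G a disjoint union of cliques on m = 2 max(K, 1) vertices, so that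
   Delta + 1 = m. A proper colouring of an m-clique with m colours uses every
   colour, so a colourable list assignment puts colour 0 into some list of every
   clique. A random K-subset of [m] misses colour 0 with probability 1/2, so a
   clique fails independently with probability 2^-m, and all n/m cliques succeed
   with probability at most (1 - 2^-m)^(n/m) <= 2^m m / n. Since
   K = o(log n / log log n), eventually 2^(8 max(K, 1)) <= n, and this is o(1). *)

Section BlockHitting.
Variables (X : finType) (S Z : {set X}) (m : nat).
Hypothesis m_gt0 : 0 < m.

Definition block_hitting N : {set {ffun 'I_N -> X}} :=
  [set f : {ffun 'I_N -> X} | [forall v, f v \in S] &&
           [forall b : 'I_(N %/ m), exists v : 'I_N, (v %/ m == b) && (f v \notin Z)]].

Lemma card_ffun_on_set N (A : {set X}) :
  #|[set f : {ffun 'I_N -> X} | f \in ffun_on A]| = #|A| ^ N.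
Proof. by rewrite cardsE card_ffun_on card_ord. Qed.

Lemma card_block_hitting_le N : #|block_hitting N| <= #|S| ^ N.
Proof.
rewrite -card_ffun_on_set; apply/subset_leq_card/subsetP => f.
by rewrite !inE => /andP [/forallP fS _]; apply/ffun_onP.
Qed.

Lemma card_block_hitting_one : Z \subset S -> #|block_hitting m| <= #|S| ^ m - #|Z| ^ m.
Proof.
move=> sZS; rewrite -!card_ffun_on_set -cardsDS; last first.
  by apply/subsetP => f; rewrite !inE => /ffun_onP fZ; apply/ffun_onP => v; apply: (subsetP sZS).
apply/subset_leq_card/subsetP => f; rewrite !inE => /andP [/forallP fS /forallP hit].
have b0 : 0 < m %/ m by rewrite divnn m_gt0.
have [v /andP [_ fvZ]] := existsP (hit (Ordinal b0)).
apply/andP; split; last by apply/ffun_onP.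
by apply/ffun_onP => /(_ v); rewrite (negbTE fvZ).
Qed.

Lemma card_block_hitting_add N :
  #|block_hitting (m + N)| <= #|block_hitting m| * #|block_hitting N|.
Proof.
rewrite -cardsX.
pose halves (f : {ffun 'I_(m + N) -> X}) :=
  ([ffun i => f (lshift N i)], [ffun j => f (rshift m j)]).
have halves_inj : injective halves.
  move=> f g [/ffunP eq_l /ffunP eq_r]; apply/ffunP => v.
  rewrite -(splitK v); case: (split v) => [i|j] /=.
    by have := eq_l i; rewrite !ffunE.
  by have := eq_r j; rewrite !ffunE.
have divDm u : (m + u) %/ m = (u %/ m).+1 by rewrite divnDl // divnn m_gt0 add1n.
rewrite -(card_imset _ halves_inj); apply/subset_leq_card/subsetP => p /imsetP [f].
rewrite inE => /andP [/forallP fS /forallP hit] ->; rewrite !inE.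
apply/andP; split; apply/andP; split; try by apply/forallP => i; rewrite ffunE.
- have b0 : 0 < (m + N) %/ m by rewrite divDm.
  apply/forallP => b; have [v /andP [/eqP vb fvZ]] := existsP (hit (Ordinal b0)).
  move: vb fvZ; rewrite -(splitK v); case: (split v) => [i|j] /= vb fvZ.
    apply/existsP; exists i; rewrite ffunE fvZ andbT.
    by rewrite divn_small // eq_sym -leqn0 -ltnS (leq_trans (ltn_ord b)) // divnn m_gt0.
  by move: vb; rewrite divDm.
- apply/forallP => b.
  have b1 : b.+1 < (m + N) %/ m by rewrite divDm ltnS.
  have [v /andP [/eqP vb fvZ]] := existsP (hit (Ordinal b1)).
  move: vb fvZ; rewrite -(splitK v); case: (split v) => [i|j] /= vb fvZ.
    by move: vb; rewrite divn_small.
  apply/existsP; exists j; rewrite ffunE fvZ andbT.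
  by move: vb; rewrite divDm => -[->].
Qed.

Lemma card_block_hitting N :
  #|block_hitting N| <= #|block_hitting m| ^ (N %/ m) * #|S| ^ (N %% m).
Proof.
elim/ltn_ind: N => N IH; case: (ltnP N m) => [ltNm | leMN].
  by rewrite divn_small // modn_small // mul1n card_block_hitting_le.
rewrite -(subnKC leMN) divnDl // modnDl divnn m_gt0 add1n expnS -mulnA.
apply: leq_trans (card_block_hitting_add _) _.
by rewrite leq_mul2l IH ?orbT // ltn_subrL m_gt0 (leq_trans m_gt0).
Qed.

End BlockHitting.

Lemma leq_expn2r a b q : a <= b -> a ^ q <= b ^ q.
Proof. by move=> le_ab; case: q => // q; rewrite leq_exp2r. Qed.

Lemma leq_mul_expnS x q : q * x ^ q <= x * x.+1 ^ q.
Proof.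
elim: q => [|q IH]; first by rewrite mul0n.
have le_pow : x ^ q <= x.+1 ^ q by apply: leq_expn2r.
rewrite !expnS; move: IH le_pow; set y := x ^ q; set z := x.+1 ^ q; nia.
Qed.

Lemma expn_decay h a M q : 0 < M -> h * M <= M.-1 * a -> h ^ q * q <= M * a ^ q.
Proof.
case: M => // M _ /= hM.
have decay : (h * M.+1) ^ q <= (M * a) ^ q by apply: leq_expn2r.
rewrite !expnMn in decay.
rewrite -(leq_pmul2r (expn_gt0 M.+1 q)).
have := leq_mul_expnS M q; nia.
Qed.

Definition ksubsets (T : finType) k : {set {set T}} := [set A : {set T} | #|A| == k].

Lemma card_ksubsets_avoiding (T : finType) (x : T) k : (0 < k -> #|T| = k.*2) ->
  #|ksubsets T k| <= #|[set A in ksubsets T k | x \notin A]|.*2.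
Proof.
move=> hT; rewrite -addnn -(cardsID [set A : {set T} | x \notin A] (ksubsets T k)) setIdE leq_add2l.
have setC_inj : injective (@setC T) by apply: can_inj setCK.
rewrite -(card_imset _ setC_inj); apply/subset_leq_card/subsetP => B /imsetP [A].
rewrite !inE negbK => /andP [xA /eqP cardA] ->.
have k_gt0 : 0 < k by rewrite -cardA card_gt0; apply/set0Pn; exists x.
have := cardsC A; rewrite in_setC xA cardA hT // => cardCA; apply/eqP; lia.
Qed.

Lemma card_lists n D k : #|lists n D k| = #|ksubsets 'I_D k| ^ n.
Proof.
rewrite -[n in RHS]card_ord -card_ffun_on cardsE; apply: eq_card => L.
by rewrite !inE; apply/forallP/ffun_onP => hL v; have := hL v; rewrite inE.
Qed.

Definition block_cliques (m n : nat) : rel 'I_n :=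
  fun u v => [&& u != v, u %/ m == v %/ m & u %/ m < n %/ m].
Arguments block_cliques : clear implicits.

Section BlockCliques.
Variables (m n : nat).
Hypothesis m_gt0 : 0 < m.
Notation G := (block_cliques m n).

Lemma block_cliques_irr : irreflexive G.
Proof. by move=> u; rewrite /block_cliques eqxx. Qed.

Lemma block_cliques_sym : symmetric G.
Proof.
move=> u v; rewrite /block_cliques [v == u]eq_sym [v %/ m == _]eq_sym.
by case E: (u %/ m == v %/ m); rewrite ?andbF // (eqP E).
Qed.

Lemma card_block_le b : #|[set u : 'I_n | u %/ m == b]| <= m.
Proof.
pose residue (u : 'I_n) : 'I_m := Ordinal (ltn_pmod u m_gt0).
have residue_inj : {in [set u : 'I_n | u %/ m == b] &, injective residue}.
  move=> u w; rewrite !inE => /eqP ub /eqP wb /(congr1 val) /= uw.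
  by apply: val_inj; rewrite /= (divn_eq u m) (divn_eq w m) ub wb uw.
by rewrite -(card_in_imset residue_inj) -[m in _ <= m]card_ord max_card.
Qed.

Lemma card_neighbours_le v : #|[set u | G v u]| <= m.-1.
Proof.
set B := [set u : 'I_n | u %/ m == v %/ m].
have vB : v \in B by rewrite inE.
rewrite -ltnS prednK // (leq_trans _ (card_block_le (v %/ m))) // (cardsD1 v B) vB.
apply/subset_leq_card/subsetP => u; rewrite !inE /block_cliques.
by case/and3P => vu /eqP vuB _; rewrite eq_sym vu vuB eqxx.
Qed.

Lemma maxdeg_block_cliques_le : maxdeg G <= m.-1.
Proof. by apply/bigmax_leqP => v _; apply: card_neighbours_le. Qed.

Lemma maxdeg_block_cliques : m <= n -> maxdeg G = m.-1.
Proof.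
move=> le_mn; apply/eqP; rewrite eqn_leq maxdeg_block_cliques_le /=.
pose v0 : 'I_n := Ordinal (leq_trans m_gt0 le_mn).
apply: (@leq_trans #|[set u | G v0 u]|); last exact: leq_bigmax.
rewrite -[m in m.-1]card_ord -(cardsC1 (Ordinal m_gt0)).
have widen_inj : injective (widen_ord le_mn).
  by move=> i j /(congr1 val) ij; apply: val_inj.
rewrite -(card_imset _ widen_inj); apply/subset_leq_card/subsetP.
move=> w /imsetP [i]; rewrite !inE => i_neq0 ->.
rewrite /block_cliques /= div0n divn_small // divn_gt0 // le_mn eqxx !andbT.
by apply: contraNneq i_neq0 => /(congr1 val) v0i; apply/eqP/val_inj.
Qed.

Lemma block_cliques_coloring_onto (C : finType) (c : 'I_n -> C) :
  #|C| <= m -> (forall u v, G u v -> c u != c v) ->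
  forall (b : 'I_(n %/ m)) (x : C), exists2 v : 'I_n, v %/ m = b & c v = x.
Proof.
move=> le_Cm proper b x.
have block_lt (i : 'I_m) : b * m + i < n.
  apply: leq_trans (leq_divM n m); apply: (@leq_trans (b.+1 * m)).
    by rewrite mulSnr ltn_add2l.
  by rewrite leq_mul2r ltn_ord orbT.
pose w i := Ordinal (block_lt i).
have w_block i : w i %/ m = b by rewrite /= divnMDl // (divn_small (ltn_ord i)) addn0.
have cw_inj : injective (c \o w).
  move=> i j /eqP; apply: contraTeq => neq_ij; apply: proper.
  rewrite /block_cliques !w_block eqxx ltn_ord andbT.
  by rewrite andbT; apply: contraNneq neq_ij => /(congr1 val) /= /addnI /val_inj ->.
have le_C_I : #|C| <= #|'I_m| by rewrite card_ord.
have /codomP [i ->] := inj_card_onto cw_inj le_C_I x.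
by exists (w i).
Qed.

End BlockCliques.

Lemma good_lists_block_hitting m n k : 0 < m ->
  good_lists (block_cliques m n) k \subset
  block_hitting (ksubsets _ k) [set A in ksubsets _ k | ord0 \notin A] m n.
Proof.
move=> m_gt0; apply/subsetP => L; rewrite !inE.
case/andP => /forallP cardL /existsP [c /andP [/forallP cL /forallP proper]].
apply/andP; split; first by apply/forallP => v; rewrite inE cardL.
apply/forallP => b.
have colors_le : #|'I_(maxdeg (block_cliques m n)).+1| <= m.
  by rewrite card_ord -(prednK m_gt0) ltnS maxdeg_block_cliques_le.
have proper_c u v : block_cliques m n u v -> c u != c v.
  by apply/implyP; move/forallP: (proper u).
have [v vb cv0] := block_cliques_coloring_onto m_gt0 colors_le proper_c b ord0.
by apply/existsP; exists v; rewrite vb eqxx !inE -cv0 cL andbF.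
Qed.

Lemma card_good_lists_block_cliques m n k : 0 < m -> m <= n -> (0 < k -> m = k.*2) ->
  #|good_lists (block_cliques m n) k| * (n %/ m)
    <= 2 ^ m * #|lists n (maxdeg (block_cliques m n)).+1 k|.
Proof.
move=> m_gt0 le_mn hk; set D := (maxdeg _).+1.
have D_eq : D = m by rewrite /D maxdeg_block_cliques // prednK.
set Sk := ksubsets 'I_D k; set Zk := [set A in Sk | ord0 \notin A].
have sub_ZS : Zk \subset Sk by apply/subsetP => A; rewrite inE => /andP [].
have card_S : #|Sk| <= #|Zk|.*2.
  by apply: card_ksubsets_avoiding; rewrite card_ord D_eq.
set h := #|block_hitting Sk Zk m m|.
have decay : h * 2 ^ m <= (2 ^ m).-1 * #|Sk| ^ m.
  have h_le := card_block_hitting_one m_gt0 sub_ZS.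
  have S_le : #|Sk| ^ m <= 2 ^ m * #|Zk| ^ m by rewrite -expnMn leq_expn2r // mul2n.
  have pow_gt0 : 0 < 2 ^ m by rewrite expn_gt0.
  move: h_le S_le pow_gt0; rewrite -/h.
  set a := #|Sk| ^ m; set b := #|Zk| ^ m; set M := 2 ^ m; nia.
have lists_eq : #|Sk| ^ n = (#|Sk| ^ m) ^ (n %/ m) * #|Sk| ^ (n %% m).
  by rewrite -expnM -expnD mulnC -divn_eq.
have good_le : #|good_lists (block_cliques m n) k| <= h ^ (n %/ m) * #|Sk| ^ (n %% m).
  apply: leq_trans _ (card_block_hitting Sk Zk m_gt0 n).
  exact/subset_leq_card/good_lists_block_hitting.
rewrite card_lists -/Sk lists_eq mulnA; apply: leq_trans (leq_mul good_le (leqnn _)) _.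
by rewrite mulnAC leq_mul2r expn_decay ?expn_gt0 ?orbT.
Qed.

Lemma leq_mul_of_sqr x y n : x * x <= n -> y * y <= n -> x * y <= n.
Proof. nia. Qed.

Lemma block_size_le k n : (2 ^ 8) ^ maxn k 1 <= n -> 2 * maxn k 1 <= n.
Proof.
move=> big_n; apply: leq_trans big_n; rewrite -expnM.
apply: leq_trans (ltnW (ltn_expl _ (ltnSn 1))) _.
by apply: leq_pexp2l => //; lia.
Qed.

Lemma card_good_lists_le k n p (m := 2 * maxn k 1) : (2 ^ 8) ^ maxn k 1 <= n -> p * p <= n ->
  #|good_lists (block_cliques m n) k| * p <= #|lists n (maxdeg (block_cliques m n)).+1 k|.
Proof.
move=> big_n p_le.
have m_gt0 : 0 < m by rewrite /m muln_gt0 leq_maxr.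
have pow4_le : (2 ^ m * 2 ^ m) * (2 ^ m * 2 ^ m) <= n.
  by rewrite -!expnD (leq_trans _ big_n) // -expnM leq_pexp2l /m //; lia.
have m_lt_pow : m < 2 ^ m by apply: ltn_expl.
have le_mn : m <= n := block_size_le big_n.
have p_le_q : p * 2 ^ m <= n %/ m.
  rewrite leq_divRL // -mulnA; apply: leq_trans (leq_mul_of_sqr p_le pow4_le).
  by rewrite !leq_mul2l (ltnW m_lt_pow) !orbT.
have hk : 0 < k -> m = k.*2 by rewrite /m; lia.
have := card_good_lists_block_cliques m_gt0 le_mn hk.
have := expn_gt0 2 m; move: p_le_q.
set g := #|good_lists _ _|; set L := #|lists _ _ _|; set q := n %/ m; set M := 2 ^ m; nia.
Qed.

Section Asymptotics.
Local Open Scope R_scope.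

Lemma INR_expn c k : INR (c ^ k) = INR c ^ k.
Proof. by elim: k => // k IH; rewrite expnS mult_INR IH. Qed.

Lemma expn_le_of_ln c k n : (0 < c)%N -> (0 < n)%N ->
  INR k * ln (INR c) <= ln (INR n) -> (c ^ k <= n)%N.
Proof.
move=> /ltP c_gt0 /ltP n_gt0 hln; rewrite leqNgt; apply/negP => /ltP/lt_INR.
rewrite INR_expn => lt_pow.
have := ln_increasing _ _ (lt_0_INR _ n_gt0) lt_pow.
by rewrite ln_pow; [lra | apply: lt_0_INR].
Qed.

Lemma eventually_expn_le (K : nat -> nat)
  (hK : forall eps, 0 < eps -> exists N : nat, forall n : nat, (N <= n)%N ->
          INR (K n) <= eps * (ln (INR n) / ln (ln (INR n))))
  (c : nat) : (1 < c)%N -> exists N : nat, forall n : nat, (N <= n)%N -> (c ^ maxn (K n) 1 <= n)%N.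
Proof.
move=> c_gt1.
have ln_c_gt0 : 0 < ln (INR c).
  by rewrite -ln_1; apply: ln_increasing; [lra | apply/lt_1_INR/ltP].
have [N0 hN0] := hK _ (Rinv_0_lt_compat _ ln_c_gt0).
have [N1 hN1] := INR_unbounded (exp (exp 1)).
exists (maxn c (maxn N0 N1)) => n hn.
case: (leqP (K n) 1) => hKn; first by rewrite expn1; lia.
apply: expn_le_of_ln; [lia | lia |].
have lnn_gt : exp 1 < ln (INR n).
  rewrite -[exp 1]ln_exp; apply: ln_increasing; first exact: exp_pos.
  by apply: Rlt_le_trans (le_INR N1 n _); [lra | apply/leP; lia].
have lnlnn_gt1 : 1 < ln (ln (INR n)).
  rewrite -[1]ln_exp; apply: ln_increasing; [exact: exp_pos | lra].
have x_gt0 : 0 < ln (INR n) by have := exp_pos 1; lra.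
move: (hN0 n ltac:(lia)) x_gt0 lnlnn_gt1.
set x := ln (INR n); set y := ln x => hKx x_gt0 y_gt1.
have ratio_le : x / y <= x.
  apply: (Rmult_le_reg_r y); first lra.
  rewrite /Rdiv Rmult_assoc Rinv_l; nra.
have inv_gt0 := Rinv_0_lt_compat _ ln_c_gt0.
have inv_mul : / ln (INR c) * ln (INR c) = 1 by apply: Rinv_l; lra.
nra.
Qed.

Lemma INR_le_eps_mul g p s eps : 0 < eps -> / eps < INR p -> (g * p <= s)%N ->
  INR g <= eps * INR s.
Proof.
move=> eps_gt0 inv_lt /leP/le_INR; rewrite mult_INR => le_gps.
have eps_p_gt1 : 1 < eps * INR p.
  by rewrite -(Rinv_r eps); [apply: Rmult_lt_compat_l | lra].
have := pos_INR g; nra.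
Qed.

End Asymptotics.

(* Gives [%R] back to [R_scope], which MathComp's ring scope shadowed. *)
From Stdlib Require Import Reals.

Theorem mainTheorem16 (K : nat -> nat)
  (hK : forall eps : R, (0 < eps)%R -> exists N : nat, forall n : nat, (N <= n)%N ->
          (INR (K n) <= eps * (ln (INR n) / ln (ln (INR n))))%R) :
  exists G : forall n : nat, rel 'I_n,
    (forall n : nat, irreflexive (G n) /\ symmetric (G n)) /\
    exists N : nat,
      (forall n : nat, (N <= n)%N -> (K n <= (maxdeg (G n)).+1)%N) /\
      (forall eps : R, (0 < eps)%R -> exists M : nat, forall n : nat, (M <= n)%N ->
         (INR #|good_lists (G n) (K n)|
            <= eps * INR #|lists n (maxdeg (G n)).+1 (K n)|)%R).
Proof.
exists (fun n => block_cliques (2 * maxn (K n) 1) n); split.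
  by move=> n; split; [exact: block_cliques_irr | exact: block_cliques_sym].
have [N big_n] := eventually_expn_le hK (isT : 1 < 2 ^ 8).
exists N; split.
  move=> n /big_n/block_size_le le_mn.
  by rewrite maxdeg_block_cliques ?prednK ?muln_gt0 ?leq_maxr //; lia.
move=> eps eps_gt0; have [p p_gt] := INR_unbounded (/ eps).
exists (maxn N (p * p)) => n hn.
apply: (INR_le_eps_mul eps_gt0 p_gt); apply: card_good_lists_le; last by lia.
by apply: big_n; lia.
Qed.
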